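(* Let $G$ be a finite non-abelian group satisfying condition (Con), let $L$ be the Laplacian matrix of $\mathcal C_G$, and let $r$ be the number of connected components of the induced subgraph of $\mathcal C_G$ on $G\setminus Z(G)$. Then $|Z(G)|$ is an eigenvalue of $L$ with multiplicity at least $r-1$.
   Context: For a finite group $G$, the commuting graph $\mathcal C_G$ is the simple undirected graph with vertex set $G$ in which distinct $u,v\in G$ are adjacent iff $uv=vu$. The Laplacian matrix of a simple graph is $L=D-A$ ($A$ adjacency matrix, $D$ diagonal degree matrix). $Z(G)$ is the center of $G$ and $C(v)=\{w\in G: wv=vw\}$ the centralizer of $v$. Condition (Con): for all $u,v\in G\setminus Z(G)$, either $C(u)=C(v)$ or $C(u)\cap C(v)=Z(G)$. *)

From mathcomp Require Import all_boot all_order all_algebra all_fingroup all_solvable all_field.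
Set Implicit Arguments.
Unset Strict Implicit.
Unset Printing Implicit Defensive.
Import GRing.Theory Num.Theory.

Local Open Scope group_scope.

(* The finite group G is the whole carrier of gT : finGroupType. *)

Definition comm_adj (gT : finGroupType) (x y : gT) : bool :=
  (x != y) && (x * y == y * x).

Definition comm_deg (gT : finGroupType) (x : gT) : nat :=
  #|[set y : gT | comm_adj x y]|.

Definition Con (gT : finGroupType) : Prop :=
  forall u v : gT, u \notin 'Z([set: gT]) -> v \notin 'Z([set: gT]) ->
    'C[u] = 'C[v] \/ 'C[u] :&: 'C[v] = 'Z([set: gT]).

Definition comm_laplacian (gT : finGroupType) : 'M[algC]_#|gT| :=
  \matrix_(i, j)
    ((if i == j then (comm_deg (enum_val i))%:R else 0)
     - (comm_adj (enum_val i) (enum_val j))%:R)%R.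

Definition noncentral_rel (gT : finGroupType) : rel gT :=
  fun x y => [&& x \notin 'Z([set: gT]), y \notin 'Z([set: gT]) & comm_adj x y].

Definition noncentral_ncomp (gT : finGroupType) : nat :=
  n_comp (@noncentral_rel gT) [pred x : gT | x \notin 'Z([set: gT])].

From mathcomp Require Import all_boot all_order all_algebra all_fingroup all_solvable all_field.
From mathcomp Require Import ring.
Set Implicit Arguments. Unset Strict Implicit. Unset Printing Implicit Defensive.
Import GRing.Theory Num.Theory.

(* Let Z = Z(G) and, for a noncentral x, let K(x) = C(x) \ Z be its          *)
(* "noncentral centralizer".  Under (Con), commuting noncentral elements have *)
(* equal centralizers, so the sets K(x) partition G \ Z and are exactly the   *)
(* connected components of the commuting graph restricted to G \ Z.          *)
(* Since the degree of x in C_G is |C(x)| - 1, the Laplacian acts by          *)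
(*        (L f)(x) = |C(x)| f(x) - sum_{y in C(x)} f(y),                     *)
(* so every f vanishing on Z, constant on each class K and of total sum 0     *)
(* satisfies L f = |Z| f.  Fixing one class K_0 and taking, for each other    *)
(* class K_s, f_s = |K_0| 1_{K_s} - |K_s| 1_{K_0} gives r - 1 independent      *)
(* eigenvectors; a general linear-algebra lemma (geometric multiplicity is    *)
(* at most algebraic multiplicity) turns them into the divisibility           *)
(* (X - |Z|)^(r-1) | char_poly L.  Finally a non-abelian G has two            *)
(* noncommuting elements lying in different classes, so r >= 2 and |Z| is an  *)
(* eigenvalue.                                                                *)

Section LinearAlgebra.
Local Open Scope ring_scope.
Variable F : fieldType.

Lemma char_poly_similar n (f g B : 'M[F]_n) :
  B \in unitmx -> B *m f = g *m B -> char_poly f = char_poly g.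
Proof.
move=> uB Bf.
have E : char_poly_mx g *m map_mx polyC B = map_mx polyC B *m char_poly_mx f.
  rewrite /char_poly_mx mulmxBl mulmxBr -!map_mxM -Bf.
  by rewrite mul_scalar_mx mul_mx_scalar.
have := congr1 determinant E; rewrite !det_mulmx det_map_mx [RHS]mulrC.
have nzB : (\det B)%:P != 0 by rewrite polyC_eq0 -unitfE -unitmxE.
by move/(mulIf nzB)/esym.
Qed.

Lemma char_poly_scalar_block k m (a : F) (C : 'M[F]_(m, k)) (D : 'M[F]_m) :
  char_poly (block_mx (a%:M : 'M_k) 0 C D) = ('X - a%:P) ^+ k * char_poly D.
Proof.
rewrite /char_poly /char_poly_mx map_block_mx /= map_mx0 scalar_mx_block.
rewrite opp_block_mx add_block_mx oppr0 addr0 add0r det_lblock.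
by congr (_ * _); rewrite map_scalar_mx /= -raddfB det_scalar.
Qed.

Lemma eigen_rows_dvd_char_poly n (f : 'M[F]_n) (a : F) k (V : 'M[F]_(k, n)) :
  row_free V -> V *m f = a *: V -> ('X - a%:P) ^+ k %| char_poly f.
Proof.
move=> freeV Vf.
have [m defn] : exists m, n = (k + m)%N.
  by exists (n - k)%N; rewrite subnKC // -(eqP freeV) rank_leq_col.
subst n.
have rkC : \rank (V^C)%MS = m by rewrite mxrank_compl (eqP freeV) addKn.
have : exists W : 'M[F]_(\rank (V^C)%MS, k + m), (W == V^C)%MS.
  by exists (row_base (V^C)%MS); apply/eqmxP; exact: eq_row_base.
rewrite rkC => -[W /eqmxP eqW].
pose B := col_mx V W.
have uB : B \in unitmx.
  rewrite -row_full_unit -sub1mx -addsmxE (adds_eqmx (eqmx_refl V) eqW).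
  by rewrite sub1mx addsmx_compl_full.
pose C := W *m f *m invmx B.
suff -> : char_poly f = char_poly (block_mx (a%:M : 'M_k) 0 (lsubmx C) (rsubmx C)).
  by rewrite char_poly_scalar_block dvdp_mulIl.
apply: (char_poly_similar uB).
rewrite mul_col_mx mul_block_col mul0mx addr0 mul_scalar_mx Vf.
by rewrite -mul_row_col hsubmxK /C mulmxKV.
Qed.

End LinearAlgebra.

Lemma sum_enum_val (T : finType) (R : nmodType) (f : T -> R) :
  (\sum_(k < #|T|) f (enum_val k) = \sum_y f y)%R.
Proof. by rewrite -(big_enum_val f). Qed.

Section CommutingGraph.
Variable gT : finGroupType.
Local Open Scope group_scope.
Local Notation Z := 'Z([set: gT]).
Local Notation e := (@noncentral_rel gT).

Lemma centerTP (x : gT) : reflect (forall y, commute x y) (x \in Z).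
Proof.
apply: (iffP (centerP _ _)) => [[_ cx] y | cx]; first exact: cx (in_setT y).
by split=> // y _; exact: cx.
Qed.

Lemma center_sub_cent1 (x : gT) : Z \subset 'C[x].
Proof. by apply/subsetP => z /centerTP cz; apply/cent1P. Qed.

Lemma noncommuting_pair : ~~ abelian [set: gT] -> exists x y : gT, y \notin 'C[x].
Proof.
move=> nab; case: (pickP (fun p : gT * gT => p.2 \notin 'C[p.1])) => [[x y] nyx|comm].
  by exists x, y.
case/negP: nab; apply/centsP => x _ y _.
by have /negbFE/cent1P := comm (y, x).
Qed.

Lemma comm_adjE (x y : gT) : comm_adj x y = (x != y) && (y \in 'C[x]).
Proof. by rewrite /comm_adj; congr (_ && _); apply/eqP/cent1P => h; exact: esym h. Qed.

Lemma noncentral_rel_sym : symmetric e.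
Proof.
move=> x y; rewrite /noncentral_rel !comm_adjE [y == x]eq_sym cent1C.
by case: (x \in Z); case: (y \in Z).
Qed.

Lemma noncentral_ncompE :
  noncentral_ncomp gT = #|[set x | roots e x & x \notin Z]|.
Proof. by apply: eq_card => x; rewrite !inE. Qed.

Definition ncent (x : gT) : {set gT} := 'C[x] :\: Z.

Lemma card_cent1 (x : gT) : #|'C[x]| = (#|ncent x| + #|Z|)%N.
Proof. by rewrite -(cardsID Z 'C[x]) (setIidPr (center_sub_cent1 x)) addnC. Qed.

Lemma ncent_id (x : gT) : x \notin Z -> x \in ncent x.
Proof. by move=> hx; rewrite in_setD hx cent1id. Qed.

Lemma ncent_sym (x y : gT) : x \notin Z -> y \notin Z ->
  (y \in ncent x) = (x \in ncent y).
Proof. by move=> hx hy; rewrite !in_setD hx hy cent1C. Qed.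

Local Open Scope ring_scope.

Definition lap (x y : gT) : algC :=
  (if x == y then (comm_deg x)%:R else 0) - (comm_adj x y)%:R.

Lemma comm_laplacianE (i j : 'I_#|gT|) :
  comm_laplacian gT i j = lap (enum_val i) (enum_val j).
Proof. by rewrite mxE /lap (inj_eq enum_val_inj). Qed.

Lemma lap_sym (x y : gT) : lap x y = lap y x.
Proof.
rewrite /lap /comm_adj [y == x]eq_sym [(y * x)%g == _]eq_sym.
by case: eqP => [->|].
Qed.

Lemma comm_deg_cent1 (x : gT) : comm_deg x = #|'C[x]|.-1%N.
Proof.
rewrite /comm_deg; have -> : [set y | comm_adj x y] = 'C[x] :\ x.
  by apply/setP => y; rewrite in_set in_setD1 comm_adjE [x == y]eq_sym.
by rewrite (cardsD1 x 'C[x]) cent1id.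
Qed.

Lemma lap_mul (f : gT -> algC) (x : gT) :
  \sum_y lap x y * f y = #|'C[x]|%:R * f x - \sum_(y in 'C[x]) f y.
Proof.
have diag : \sum_y (if x == y then (comm_deg x)%:R else 0) * f y
            = (comm_deg x)%:R * f x.
  rewrite (bigD1 x) //= eqxx big1 ?addr0 // => y /negbTE.
  by rewrite eq_sym => ->; rewrite mul0r.
have adj : \sum_y (comm_adj x y)%:R * f y = \sum_(y in 'C[x]) f y - f x.
  rewrite (bigD1 x (cent1id x)) /= addrC addrK [RHS]big_mkcond /=.
  apply: eq_bigr => y _; rewrite comm_adjE [x == y]eq_sym andbC.
  by case: (_ && _); rewrite ?mul1r ?mul0r.
have degS : #|'C[x]| = (comm_deg x).+1.
  by rewrite comm_deg_cent1 prednK // card_gt0; apply/set0Pn; exists x; exact: cent1id.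
under eq_bigr do rewrite /lap mulrBl.
by rewrite sumrB diag adj degS mulrSr; ring.
Qed.

Lemma sum_indicator (A : {set gT}) (c : algC) :
  \sum_y (y \in A)%:R * c = #|A|%:R * c.
Proof.
rewrite -mulr_suml -sum1_card natr_sum [in RHS]big_mkcond; congr (_ * _).
by apply: eq_bigr => y _; case: (y \in A).
Qed.

Lemma lap_class_eigen (f : gT -> algC) :
  {in Z, forall y, f y = 0} ->
  (forall x y, x \notin Z -> y \in ncent x -> f y = f x) ->
  \sum_y f y = 0 ->
  forall x, \sum_y lap x y * f y = #|Z|%:R * f x.
Proof.
move=> f0 fK fs x; rewrite lap_mul.
have [xZ | xnZ] := boolP (x \in Z).
  have -> : 'C[x] = [set: gT].
    by apply/setP => y; rewrite in_setT; apply/cent1P; exact/esym/(centerTP _ xZ).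
  by rewrite f0 // !mulr0 (eq_bigl predT) ?fs ?subr0 // => y; rewrite in_setT.
have -> : \sum_(y in 'C[x]) f y = #|ncent x|%:R * f x.
  rewrite (bigID (mem Z)) /= big1 ?add0r => [|y /andP[_ /f0] //].
  rewrite (eq_bigr (fun=> f x)) => [|y /andP[cy hy]]; last first.
    by apply: fK; rewrite // in_setD hy.
  rewrite sumr_const mulr_natl; congr (_ *+ _).
  by apply: eq_card => y; rewrite in_setD andbC.
by rewrite card_cent1 natrD; ring.
Qed.

End CommutingGraph.

Section ConClasses.
Variable gT : finGroupType.
Hypothesis HCon : Con gT.
Local Open Scope group_scope.
Local Notation Z := 'Z([set: gT]).
Local Notation e := (@noncentral_rel gT).

Lemma Con_cent1_eq (x y : gT) : x \notin Z -> y \in ncent x -> 'C[x] = 'C[y].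
Proof.
move=> hx /setDP[cyx hy]; case: (HCon hx hy) => // CxCy.
have : y \in 'C[x] :&: 'C[y] by rewrite in_setI cyx cent1id.
by rewrite CxCy (negbTE hy).
Qed.

Lemma ncent_eq (x y : gT) : x \notin Z -> y \in ncent x -> ncent x = ncent y.
Proof. by move=> hx hy; rewrite /ncent (Con_cent1_eq hx hy). Qed.

Lemma ncent_mem_class (t a b : gT) : t \notin Z -> a \notin Z -> b \in ncent a ->
  (b \in ncent t) = (a \in ncent t).
Proof.
move=> ht ha hb; have hbZ : b \notin Z by case/setDP: hb.
by rewrite (ncent_sym ht hbZ) -(ncent_eq ha hb) -ncent_sym.
Qed.

Lemma connect_noncentral (x y : gT) : x \notin Z -> connect e x y = (y \in ncent x).
Proof.
move=> hx; apply/idP/idP => [cxy | hy].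
  have closed_x : closed e (ncent x).
    move=> u v /and3P[hu hv]; rewrite comm_adjE => /andP[_ cvu].
    have vu : v \in ncent u by rewrite in_setD hv cvu.
    by rewrite /= (ncent_mem_class hx hu vu).
  by rewrite -(closed_connect closed_x cxy) ncent_id.
have [<-|ne] := eqVneq x y; first exact: connect0.
by apply: connect1; move: hy; rewrite /noncentral_rel comm_adjE hx ne in_setD.
Qed.

Lemma roots_ncent_eq (r s : gT) : roots e r -> roots e s -> r \notin Z ->
  s \in ncent r -> r = s.
Proof.
move=> /eqP rr /eqP rs hr hs; rewrite -rr -rs.
apply/(fingraph.rootP (sym_connect_sym (@noncentral_rel_sym gT))).
by rewrite connect_noncentral.
Qed.

(* Two noncommuting elements give two different components. *)
Lemma noncentral_ncomp_gt1 : ~~ abelian [set: gT] -> (1 < noncentral_ncomp gT)%N.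
Proof.
case/noncommuting_pair => x [y nyx].
have xnZ : x \notin Z.
  by apply: contra nyx => /(subsetP (center_sub_cent1 y)); rewrite cent1C.
have ynZ : y \notin Z by apply: contra nyx => /(subsetP (center_sub_cent1 x)).
have symc := sym_connect_sym (@noncentral_rel_sym gT).
have root_nZ z : z \notin Z -> fingraph.root e z \notin Z.
  by move=> hz; have /setDP[] : fingraph.root e z \in ncent z
    by rewrite -connect_noncentral ?connect_root.
rewrite noncentral_ncompE; apply/card_gt1P.
exists (fingraph.root e x), (fingraph.root e y).
split; try by rewrite in_set roots_root // root_nZ.
apply: contra nyx => /eqP/(fingraph.rootP symc).
by rewrite connect_noncentral // => /setDP[].
Qed.

Local Open Scope ring_scope.

Definition class_diff (r s y : gT) : algC :=
  (y \in ncent s)%:R * #|ncent r|%:R - (y \in ncent r)%:R * #|ncent s|%:R.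

Lemma class_diff_eigen (r s : gT) : r \notin Z -> s \notin Z ->
  forall x, \sum_y lap x y * class_diff r s y = #|Z|%:R * class_diff r s x.
Proof.
move=> hr hs; apply: lap_class_eigen.
- move=> y yZ; have out t : (y \in ncent t) = false by rewrite in_setD yZ.
  by rewrite /class_diff !out !mul0r subrr.
- move=> a b ha hb.
  by rewrite /class_diff (ncent_mem_class hs ha hb) (ncent_mem_class hr ha hb).
- by rewrite /class_diff sumrB !sum_indicator mulrC subrr.
Qed.

Lemma class_diff_root (r s t : gT) :
  roots e r -> roots e s -> roots e t -> r \notin Z -> s \notin Z -> t != r ->
  class_diff r s t = (s == t)%:R * #|ncent r|%:R.
Proof.
move=> rr rs rt hr hs ntr; rewrite /class_diff.
have -> : (t \in ncent r) = false.
  by apply: contraNF ntr => /(roots_ncent_eq rr rt hr) ->.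
have -> : (t \in ncent s) = (s == t).
  by apply/idP/eqP => [/(roots_ncent_eq rs rt hs) | <-] //; exact: ncent_id.
by rewrite mul0r subr0.
Qed.

Lemma laplacian_roots_dvd (r : gT) (S : {set gT}) :
  r \notin Z -> roots e r ->
  {in S, forall s, [/\ s \notin Z, roots e s & s != r]} ->
  ('X - (#|Z|%:R)%:P) ^+ #|S| %| char_poly (comm_laplacian gT).
Proof.
move=> hr rr hS.
pose V := \matrix_(i < #|S|, j < #|gT|) class_diff r (enum_val i) (enum_val j).
have cr_neq0 : #|ncent r|%:R != 0 :> algC.
  by rewrite pnatr_eq0 -lt0n card_gt0; apply/set0Pn; exists r; exact: ncent_id.
apply: (@eigen_rows_dvd_char_poly _ _ _ _ _ V).
  apply/row_freeP.
  exists (\matrix_(j, i) ((enum_val j == enum_val i)%:R / #|ncent r|%:R)).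
  apply/matrixP => i i'; rewrite !mxE.
  under eq_bigr => k _ do rewrite !mxE.
  rewrite (sum_enum_val
    (fun y => class_diff r (enum_val i) y * ((y == enum_val i')%:R / #|ncent r|%:R))).
  rewrite (bigD1 (enum_val i')) //= eqxx big1 ?addr0; last first.
    by move=> y /negbTE ->; rewrite mul0r mulr0.
  have [hi1 hi2 _] := hS _ (enum_valP i).
  have [_ hj2 hj3] := hS _ (enum_valP i').
  by rewrite class_diff_root // (inj_eq enum_val_inj) mul1r mulfK.
apply/matrixP => i j; rewrite !mxE.
under eq_bigr => k _ do rewrite mxE comm_laplacianE lap_sym mulrC.
rewrite (sum_enum_val (fun y => lap (enum_val j) y * class_diff r (enum_val i) y)).
by rewrite class_diff_eigen //; case: (hS _ (enum_valP i)).
Qed.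

Lemma laplacian_ncomp_dvd :
  ('X - (#|Z|%:R)%:P) ^+ (noncentral_ncomp gT).-1 %| char_poly (comm_laplacian gT).
Proof.
rewrite noncentral_ncompE; set R := [set x | _ & _].
have [-> | [r0 Rr0]] := set_0Vmem R; first by rewrite cards0 expr0 dvd1p.
rewrite (cardsD1 r0 R) Rr0 add1n /=.
move: Rr0; rewrite in_set => /andP[rr0 hr0].
apply: (laplacian_roots_dvd hr0 rr0) => s.
by rewrite in_setD1 [s \in R]in_set => /and3P[ns0 rs hs].
Qed.

End ConClasses.

Theorem proposition2p8 (gT : finGroupType) :
  ~~ abelian [set: gT]%g -> Con gT ->
  eigenvalue (comm_laplacian gT) (#|('Z([set: gT]))%g|%:R)%R /\
  (noncentral_ncomp gT - 1 <= mup (#|('Z([set: gT]))%g|%:R)%R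
                                  (char_poly (comm_laplacian gT)))%N.
Proof.
move=> nab HC.
have cp_neq0 := monic_neq0 (char_poly_monic (comm_laplacian gT)).
have mup_ge : ((noncentral_ncomp gT).-1 <= mup (#|('Z([set: gT]))%g|%:R)%R
                                           (char_poly (comm_laplacian gT)))%N.
  by rewrite mup_geq //; exact: laplacian_ncomp_dvd.
split; last by rewrite subn1.
rewrite eigenvalue_root_char -dvdp_XsubCl XsubC_dvd //.
apply: leq_trans mup_ge; rewrite -subn1 subn_gt0.
exact: noncentral_ncomp_gt1.
Qed.
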